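(* Let $\mathbb{X}=(X,\tau_{\mathbb{X}})$ be a topological space, $\Omega_0$ a viable base of $\mathbb{X}$, $\mathbb{D}=(D,\sqsubseteq)$ a bc-domain and $D_0\subseteq D$ a basis of $\mathbb{D}$. Then $[\widehat{\mathbb{X}}_{\Omega_0}\to\mathbb{D}]$ is a bc-domain with basis $$\widehat{\mathbb{B}}=\Big\{\bigsqcup_{i\in I}b_i\chi_{\mathcal{O}_{{\downarrow}W_i}} : I\text{ finite},\ \{b_i\chi_{\mathcal{O}_{{\downarrow}W_i}}\}_{i\in I}\text{ consistent},\ W_i\in\Omega_0,\ b_i\in D_0\Big\},$$ where ${\downarrow}W=\{U\in\Omega_0:U\subseteq W\}$. If moreover $\Omega_0$ is countable and $\mathbb{D}$ is $\omega$-continuous, then $[\widehat{\mathbb{X}}_{\Omega_0}\to\mathbb{D}]$ is $\omega$-continuous.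
   Context: A viable base of $\mathbb{X}$ is a family $\Omega_0\subseteq\tau_{\mathbb{X}}$ closed under finite unions and finite intersections (so $\emptyset,X\in\Omega_0$) which is a base of $\tau_{\mathbb{X}}$. $\mathrm{Idl}(\Omega_0)$ is the set of ideals (nonempty, downward closed, directed subsets) of $(\Omega_0,\subseteq)$, ordered by inclusion; a complete lattice. A completely prime filter of a complete lattice $L$ is a nonempty upward closed $F\subseteq L$ closed under binary meets with $\bigvee A\in F\Rightarrow A\cap F\neq\emptyset$. $\widehat{\mathbb{X}}_{\Omega_0}$ is the set $\widehat{X}$ of completely prime filters of $\mathrm{Idl}(\Omega_0)$ with the topology whose open sets are exactly $\mathcal{O}_I=\{y: I\in y\}$. A bc-domain is a dcpo with least element $\bot$, continuous (each element is the directed join of elements way-below it), in which every subset with an upper bound has a join; a basis of a dcpo is a subset $B$ such that for every $x$, $\{a\in B: a\ll x\}$ is directed with join $x$; $\omega$-continuous means having a countable basis. $[\widehat{\mathbb{X}}_{\Omega_0}\to\mathbb{D}]$ is the set of functions continuous into the Scott topology of $D$, ordered pointwise. $b\chi_O$ is the function with value $b$ on $O$ and $\bot$ elsewhere; a family $\{b_i\chi_{O_i}\}$ is consistent if for every $J\subseteq I$ with $\bigcap_{j\in J}O_j\neq\emptyset$ the set $\{b_j: j\in J\}$ has an upper bound; joins of such families are pointwise. *)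

From mathcomp Require Import all_boot classical_sets topology.

Unset Strict Implicit.
Unset Printing Implicit Defensive.

Local Open Scope classical_set_scope.

Section Order.
Context {P : Type} (le : P -> P -> Prop).

Definition is_ub (A : set P) (u : P) := forall a, A a -> le a u.

Definition is_lub (A : set P) (s : P) :=
  is_ub A s /\ forall u, is_ub A u -> le s u.

Definition partial_order :=
  [/\ forall x, le x x,
      forall x y z, le x y -> le y z -> le x z &
      forall x y, le x y -> le y x -> x = y].

Definition directed (A : set P) :=
  (exists a, A a) /\
  forall a b, A a -> A b -> exists c, [/\ A c, le a c & le b c].

Definition dcpo :=
  partial_order /\ forall A, directed A -> exists s, is_lub A s.

Definition way_below (x y : P) :=
  forall A s, directed A -> is_lub A s -> le y s -> exists a, A a /\ le x a.

Definition continuous_po :=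
  forall x, directed (fun a => way_below a x) /\ is_lub (fun a => way_below a x) x.

Definition is_basis (B : set P) :=
  forall x, directed (fun a => B a /\ way_below a x) /\
            is_lub (fun a => B a /\ way_below a x) x.

Definition bc_domain :=
  [/\ dcpo,
      (exists bot, forall x, le bot x),
      continuous_po &
      forall A, (exists u, is_ub A u) -> exists s, is_lub A s].

Definition countable_set {Q : Type} (B : set Q) :=
  exists g : Q -> nat, forall a b, B a -> B b -> g a = g b -> a = b.

Definition omega_continuous :=
  continuous_po /\ exists B, is_basis B /\ countable_set B.

Definition scott_open (U : set P) :=
  (forall x y, U x -> le x y -> U y) /\
  forall A s, directed A -> is_lub A s -> U s -> exists a, A a /\ U a.

End Order.

Section Hat.
Context {T : topologicalType}.

Definition viable_base (Omega0 : set (set T)) :=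
  [/\ Omega0 `<=` open,
      Omega0 set0 /\ Omega0 setT,
      (forall U V, Omega0 U -> Omega0 V -> Omega0 (U `|` V)),
      (forall U V, Omega0 U -> Omega0 V -> Omega0 (U `&` V)) &
      (forall U, open U -> forall x, U x -> exists W, [/\ Omega0 W, W x & W `<=` U])].

Definition is_ideal (Omega0 : set (set T)) (I : set (set T)) :=
  [/\ (exists U, I U),
      I `<=` Omega0,
      (forall U W, I W -> Omega0 U -> U `<=` W -> I U) &
      (forall U V, I U -> I V -> exists W, [/\ I W, U `<=` W & V `<=` W])].

Definition ideal_join (Omega0 : set (set T)) (A : set (set (set T)))
    (J : set (set T)) :=
  [/\ is_ideal Omega0 J,
      (forall I, A I -> I `<=` J) &
      (forall L, is_ideal Omega0 L -> (forall I, A I -> I `<=` L) -> J `<=` L)].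

Definition ideal_meet (Omega0 : set (set T)) (I J K : set (set T)) :=
  [/\ is_ideal Omega0 K, K `<=` I, K `<=` J &
      (forall L, is_ideal Omega0 L -> L `<=` I -> L `<=` J -> L `<=` K)].

Definition cp_filter (Omega0 : set (set T)) (y : set (set (set T))) :=
  [/\ (forall I, y I -> is_ideal Omega0 I),
      (exists I, y I),
      (forall I J, y I -> is_ideal Omega0 J -> I `<=` J -> y J),
      (forall I J K, y I -> y J -> ideal_meet Omega0 I J K -> y K) &
      (forall A J, A `<=` is_ideal Omega0 -> ideal_join Omega0 A J -> y J ->
         exists I, A I /\ y I)].

Definition hatX (Omega0 : set (set T)) :=
  {y : set (set (set T)) | cp_filter Omega0 y}.

Definition hatO (Omega0 : set (set T)) (I : set (set T)) : set (hatX Omega0) :=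
  fun y => proj1_sig y I.

Definition downset (Omega0 : set (set T)) (W : set T) : set (set T) :=
  fun U => Omega0 U /\ U `<=` W.

(* continuity from \hat X_{Omega0} (opens: exactly the O_I, I ideal)
   into the Scott topology of (D, le) *)
Definition hat_scott_continuous (Omega0 : set (set T)) {D : Type}
    (le : D -> D -> Prop) (f : hatX Omega0 -> D) :=
  forall V, scott_open le V ->
    exists I, is_ideal Omega0 I /\ forall y, V (f y) <-> hatO Omega0 I y.

Definition fspace (Omega0 : set (set T)) {D : Type} (le : D -> D -> Prop) :=
  {f : hatX Omega0 -> D | hat_scott_continuous Omega0 le f}.

Definition fle (Omega0 : set (set T)) {D : Type} (le : D -> D -> Prop)
    (f g : fspace Omega0 le) :=
  forall y, le (proj1_sig f y) (proj1_sig g y).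

Definition consistent_family (Omega0 : set (set T)) {D : Type}
    (le : D -> D -> Prop) (n : nat) (b : 'I_n -> D) (W : 'I_n -> set T) :=
  forall J : set 'I_n,
    (exists y, forall j, J j -> hatO Omega0 (downset Omega0 (W j)) y) ->
    exists u, forall j, J j -> le (b j) u.

(* \hat B: the (pointwise) joins of finite consistent families of
   step functions b_i chi_{O_{down W_i}} with W_i in Omega0, b_i in D0;
   the empty join is bottom *)
Definition hatB (Omega0 : set (set T)) {D : Type} (le : D -> D -> Prop)
    (D0 : set D) (g : hatX Omega0 -> D) :=
  exists n (b : 'I_n -> D) (W : 'I_n -> set T),
    [/\ forall i, Omega0 (W i),
        forall i, D0 (b i),
        consistent_family Omega0 le n b W &
        forall y, is_lub le
          (fun d => exists i, hatO Omega0 (downset Omega0 (W i)) y /\ d = b i)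
          (g y)].

End Hat.

From mathcomp Require Import all_boot classical_sets topology boolp.

(* The points of hatX are the completely prime filters of Idl(Omega0); a Zorn
   argument turns a maximal filter of Omega0 avoiding an ideal J into such a
   point, so every O_{dn W} not contained in O_J has a point outside O_J.
   Pointwise joins of directed, resp. bounded, families of continuous maps are
   continuous (the latter because binary joins in a bc-domain are directed
   joins of joins of approximants), which makes [hatX -> D] a bc-domain.  By
   the separation property a step function b chi_{O_{dn W}} is way below f as
   soon as b << f y on O_{dn W}; every f is the directed join of the finite
   consistent joins of such steps below it, and with countable Omega0 and D0
   these joins are coded by finite lists of natural numbers. *)

Set Implicit Arguments.
Unset Strict Implicit.
Local Open Scope classical_set_scope.

Section WayBelow.
Variables (P : Type) (le : P -> P -> Prop).
Hypothesis le_po : partial_order le.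

Lemma po_refl x : le x x. Proof. by case: le_po. Qed.

Lemma po_trans x y z : le x y -> le y z -> le x z.
Proof. by case: le_po => _ tr _; apply: tr. Qed.

Lemma po_anti x y : le x y -> le y x -> x = y.
Proof. by case: le_po => _ _; apply. Qed.

Lemma lub_unique A s s' : is_lub le A s -> is_lub le A s' -> s = s'.
Proof. by move=> [ub1 l1] [ub2 l2]; apply: po_anti; [exact: l1 | exact: l2]. Qed.

Lemma lub2_ubl a1 a2 c : is_lub le [set a1; a2] c -> le a1 c.
Proof. by move=> [ub _]; exact: ub _ (or_introl erefl). Qed.

Lemma lub2_ubr a1 a2 c : is_lub le [set a1; a2] c -> le a2 c.
Proof. by move=> [ub _]; exact: ub _ (or_intror erefl). Qed.

Lemma lub2_le a1 a2 c u : is_lub le [set a1; a2] c -> le a1 u -> le a2 u -> le c u.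
Proof. by move=> [_ lc] h1 h2; apply: lc => d [->|->]. Qed.

Lemma way_below_le a x : way_below le a x -> le a x.
Proof.
move=> wa; have dx : directed le [set x].
  split; first by exists x.
  by move=> _ _ -> ->; exists x; split=> //; apply: po_refl.
have lx : is_lub le [set x] x by split=> [e -> | u ub]; [apply: po_refl | apply: ub].
by have [_ [-> //]] := wa _ _ dx lx (po_refl x).
Qed.

Lemma way_below_mono a a' x x' :
  le a a' -> way_below le a' x -> le x x' -> way_below le a x'.
Proof.
move=> aa' wa xx' A s dA lA x's.
have [e [Ae a'e]] := wa A s dA lA (po_trans xx' x's).
by exists e; split=> //; apply: po_trans aa' a'e.
Qed.

Lemma way_below_lub2 a1 a2 c x : way_below le a1 x -> way_below le a2 x ->
  is_lub le [set a1; a2] c -> way_below le c x.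
Proof.
move=> w1 w2 hc A s dA lA xs.
have [e1 [A1 l1]] := w1 A s dA lA xs; have [e2 [A2 l2]] := w2 A s dA lA xs.
have [e [Ae l1e l2e]] := dA.2 _ _ A1 A2.
by exists e; split=> //; apply: (lub2_le hc); [exact: po_trans l1 l1e | exact: po_trans l2 l2e].
Qed.

Lemma way_below_bot bot x : (forall y, le bot y) -> way_below le bot x.
Proof. by move=> hbot A s [[a Aa] _] _ _; exists a; split. Qed.

Lemma basis_continuous_po B : is_basis le B -> continuous_po le.
Proof.
move=> hB x; have [[[b0 [Bb0 wb0]] dB] [ubB lB]] := hB x.
have above a : way_below le a x -> exists b, [/\ B b, way_below le b x & le a b].
  move=> wa; have [b [[Bb wb] ab]] :=
    wa _ _ (conj (ex_intro _ b0 (conj Bb0 wb0)) dB) (conj ubB lB) (po_refl x).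
  by exists b.
split; first split.
- by exists b0.
- move=> a1 a2 /above[b1 [B1 w1 l1]] /above[b2 [B2 w2 l2]].
  have [b3 [[B3 w3] l13 l23]] := dB _ _ (conj B1 w1) (conj B2 w2).
  by exists b3; split=> //; apply: po_trans; eassumption.
- split=> [a /way_below_le // | u ub].
  by apply: lB => a [_ wa]; apply: ub.
Qed.

Hypothesis le_cont : continuous_po le.

Lemma continuous_basisT : is_basis le setT.
Proof.
move=> x; have [[[a0 wa0] dx] [ubx lx]] := le_cont x.
split; first split.
- by exists a0.
- by move=> a b [_ wa] [_ wb]; have [c [wc ac bc]] := dx _ _ wa wb; exists c.
- split=> [a [_ wa] | u ub]; first exact: ubx.
  by apply: lx => a wa; apply: ub.
Qed.

Lemma way_below_interpolate a x :
  way_below le a x -> exists c, way_below le a c /\ way_below le c x.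
Proof.
move=> wa.
pose S d := exists c, way_below le d c /\ way_below le c x.
have dS : directed le S.
  have [[[c0 wc0] dx] _] := le_cont x; have [[[d0 wd0] _] _] := le_cont c0.
  split; first by exists d0, c0.
  move=> d1 d2 [c1 [w11 w1]] [c2 [w22 w2]].
  have [c3 [w3 l13 l23]] := dx _ _ w1 w2; have [[_ dc3] _] := le_cont c3.
  have [d3 [w33 l1 l2]] :=
    dc3 _ _ (way_below_mono (po_refl _) w11 l13) (way_below_mono (po_refl _) w22 l23).
  by exists d3; split=> //; exists c3.
have lS : is_lub le S x.
  split=> [d [c [w1 w2]] | u ub].
    exact: po_trans (way_below_le w1) (way_below_le w2).
  have [_ [_ lx]] := le_cont x; apply: lx => c wc.
  have [_ [_ lc]] := le_cont c; apply: lc => d wd; apply: ub; by exists c.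
have [d [[c [w1 w2]] ad]] := wa S x dS lS (po_refl x).
by exists c; split=> //; apply: way_below_mono ad w1 (po_refl _).
Qed.

Lemma scott_open_way_below a : scott_open le (way_below le a).
Proof.
split=> [x y wx xy | A s dA lA /way_below_interpolate [c [w1 w2]]].
  exact: way_below_mono (po_refl _) wx xy.
have [e [Ae ce]] := w2 A s dA lA (po_refl s).
by exists e; split=> //; apply: way_below_mono (po_refl _) w1 ce.
Qed.

Hypothesis le_bounded_complete :
  forall A, (exists u, is_ub le A u) -> exists s, is_lub le A s.

Lemma lub2_exists a1 a2 u : le a1 u -> le a2 u -> exists c, is_lub le [set a1; a2] c.
Proof. by move=> h1 h2; apply: le_bounded_complete; exists u => d [->|->]. Qed.

(* The join of two elements is the directed join of the joins of their approximants. *)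
Lemma lub2_approx a1 a2 c V : is_lub le [set a1; a2] c -> scott_open le V -> V c ->
  exists a1' a2' c', [/\ way_below le a1' a1, way_below le a2' a2,
                         is_lub le [set a1'; a2'] c' & V c'].
Proof.
move=> hc [_ hV] Vc.
pose S c' := exists a1' a2',
  [/\ way_below le a1' a1, way_below le a2' a2 & is_lub le [set a1'; a2'] c'].
have inS a1' a2' : way_below le a1' a1 -> way_below le a2' a2 ->
    exists2 c', S c' & is_lub le [set a1'; a2'] c'.
  move=> w1 w2; have [c' hc'] := lub2_exists
    (po_trans (way_below_le w1) (lub2_ubl hc)) (po_trans (way_below_le w2) (lub2_ubr hc)).
  by exists c' => //; exists a1', a2'.
have [[[a10 w10] dir1] [_ lub1]] := le_cont a1.
have [[[a20 w20] dir2] [_ lub2]] := le_cont a2.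
have dS : directed le S.
  split; first by have [c' Sc' _] := inS _ _ w10 w20; exists c'.
  move=> c1 c2 [b1 [b2 [w1 w2 h1]]] [b1' [b2' [w1' w2' h2]]].
  have [e1 [we1 l1 l1']] := dir1 _ _ w1 w1'; have [e2 [we2 l2 l2']] := dir2 _ _ w2 w2'.
  have [c3 Sc3 h3] := inS _ _ we1 we2.
  have e1c3 := lub2_ubl h3; have e2c3 := lub2_ubr h3.
  by exists c3; split=> //; [apply: (lub2_le h1) | apply: (lub2_le h2)];
    apply: po_trans; eassumption.
have lS : is_lub le S c.
  split=> [c' [b1 [b2 [w1 w2 h]]] | u ub].
    apply: (lub2_le h).
    - exact: po_trans (way_below_le w1) (lub2_ubl hc).
    - exact: po_trans (way_below_le w2) (lub2_ubr hc).
  apply: (lub2_le hc).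
  - apply: lub1 => b1 w1; have [c' Sc' h] := inS _ _ w1 w20.
    exact: po_trans (lub2_ubl h) (ub _ Sc').
  - apply: lub2 => b2 w2; have [c' Sc' h] := inS _ _ w10 w2.
    exact: po_trans (lub2_ubr h) (ub _ Sc').
have [c' [[b1 [b2 [w1 w2 h]]] Vc']] := hV _ _ dS lS Vc.
by exists b1, b2, c'.
Qed.

End WayBelow.

Section HatX.
Variables (T : topologicalType) (Omega0 : set (set T)).
Hypothesis base : viable_base Omega0.

Local Notation dn := (downset Omega0).
Local Notation OO := (hatO Omega0).
Local Notation X := (hatX Omega0).
Local Notation ideal := (is_ideal Omega0).

Lemma base0 : Omega0 set0. Proof. by case: base => _ []. Qed.

Lemma baseU U V : Omega0 U -> Omega0 V -> Omega0 (U `|` V).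
Proof. by case: base => _ _ hU _ _; apply: hU. Qed.

Lemma baseI U V : Omega0 U -> Omega0 V -> Omega0 (U `&` V).
Proof. by case: base => _ _ _ hI _; apply: hI. Qed.

Lemma ideal_base I : ideal I -> I `<=` Omega0. Proof. by case. Qed.

Lemma ideal_down I U V : ideal I -> I V -> Omega0 U -> U `<=` V -> I U.
Proof. by case=> _ _ hd _; apply: hd. Qed.

Lemma ideal0 I : ideal I -> I set0.
Proof. by move=> iI; case: (iI) => [[U IU] _ _ _]; apply: ideal_down iI IU base0 _. Qed.

Lemma idealU I U V : ideal I -> I U -> I V -> I (U `|` V).
Proof.
move=> iI IU IV; case: (iI) => _ sub _ dir; have [W [IW sU sV]] := dir _ _ IU IV.
by apply: ideal_down iI IW (baseU (sub _ IU) (sub _ IV)) _ => x [/sU | /sV].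
Qed.

Lemma union_closed_ideal I : I `<=` Omega0 -> I set0 ->
  (forall U V, I V -> Omega0 U -> U `<=` V -> I U) ->
  (forall U V, I U -> I V -> I (U `|` V)) -> ideal I.
Proof.
move=> sub I0 down union; split=> //; first by exists set0.
by move=> U V IU IV; exists (U `|` V); split=> [| x | x]; [exact: union | left | right].
Qed.

Lemma ideal_downset W : Omega0 W -> ideal (dn W).
Proof.
move=> oW; apply: union_closed_ideal => [U [] // | | U V [_ sV] oU sUV | U V [oU sU] [oV sV]].
- by split=> //; exact: base0.
- by split=> // x /sUV /sV.
- by split=> [| x [/sU | /sV]]; [exact: baseU |..].
Qed.

Lemma idealI I J : ideal I -> ideal J -> ideal (I `&` J).
Proof.
move=> iI iJ; apply: union_closed_ideal => [U [/(ideal_base iI)] // | | U V [IV JV] oU sUV |].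
- by split; apply: ideal0.
- by split; [apply: ideal_down iI IV oU sUV | apply: ideal_down iJ JV oU sUV].
- by move=> U V [IU JU] [IV JV]; split; apply: idealU.
Qed.

Lemma hatO_ideal y I : OO I y -> ideal I.
Proof. by case: (proj2_sig y) => hI _ _ _ _; apply: hI. Qed.

Lemma hatO_up y I J : OO I y -> ideal J -> I `<=` J -> OO J y.
Proof. by case: (proj2_sig y) => _ _ hup _ _; apply: hup. Qed.

Lemma hatO_downset y U I : ideal I -> I U -> OO (dn U) y -> OO I y.
Proof. by move=> iI IU yU; apply: (hatO_up yU iI) => V [oV sV]; apply: ideal_down iI IU oV sV. Qed.

Lemma hatO_downset_sub y U V : Omega0 V -> U `<=` V -> OO (dn U) y -> OO (dn V) y.
Proof. by move=> oV sUV yU; apply: (hatO_up yU (ideal_downset oV)) => W [oW sW]; split=> // x /sW /sUV. Qed.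

(* An ideal is the join of the principal ideals of its elements. *)
Lemma hatO_cover y I : OO I y -> exists2 U, I U & OO (dn U) y.
Proof.
move=> yI; have iI := hatO_ideal yI; case: (proj2_sig y) => _ _ _ _ cp.
pose A J := exists2 U, I U & J = dn U.
have hA : A `<=` ideal by move=> J [U IU ->]; apply/ideal_downset/(ideal_base iI).
have jA : ideal_join Omega0 A I.
  split=> // [J [U IU ->] V [oV sV] | L iL hL U IU]; first exact: ideal_down iI IU oV sV.
  by apply: (hL (dn U)); [exists U | split=> //; apply: (ideal_base iI)].
by have [J [[U IU ->] yU]] := cp A I hA jA yI; exists U.
Qed.

Lemma hatO_downset0 y : ~ OO (dn set0) y.
Proof.
move=> y0; case: (proj2_sig y) => _ _ _ _ cp.
have jA : ideal_join Omega0 set0 (dn set0).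
  split=> //; first exact: ideal_downset base0.
  by move=> L iL _ U [oU sU]; apply: ideal_down iL (ideal0 iL) oU sU.
by have [J [[] _]] := cp set0 _ (sub0set _) jA y0.
Qed.

Lemma hatO_downsetU y U V : Omega0 U -> Omega0 V ->
  OO (dn (U `|` V)) y -> OO (dn U) y \/ OO (dn V) y.
Proof.
move=> oU oV yUV; case: (proj2_sig y) => _ _ _ _ cp.
have hA : [set dn U; dn V] `<=` ideal by move=> J [-> | ->]; apply: ideal_downset.
have jA : ideal_join Omega0 [set dn U; dn V] (dn (U `|` V)).
  split=> [|J [-> | ->] W [oW sW] | L iL hL W [oW sW]]; first exact: ideal_downset (baseU oU oV).
  - by split=> // x /sW; left.
  - by split=> // x /sW; right.
  have LU : L U by apply: (hL (dn U)); [left | split].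
  have LV : L V by apply: (hL (dn V)); [right | split].
  exact: ideal_down iL (idealU iL LU LV) oW sW.
by have [J [[-> | ->] yJ]] := cp _ _ hA jA yUV; [left | right].
Qed.

Lemma hatO_downsetI y U V : Omega0 U -> Omega0 V ->
  OO (dn U) y -> OO (dn V) y -> OO (dn (U `&` V)) y.
Proof.
move=> oU oV yU yV; case: (proj2_sig y) => _ _ _ meet _; apply: meet yU yV _.
split=> [|W [oW sW] | W [oW sW] | L iL h1 h2 W LW]; first exact: ideal_downset (baseI oU oV).
- by split=> // x /sW [].
- by split=> // x /sW [].
have [oW s1] := h1 _ LW; have [_ s2] := h2 _ LW.
by split=> // x hx; split; [apply: s1 | apply: s2].
Qed.

Lemma hatO_downsetT y : exists2 U, Omega0 U & OO (dn U) y.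
Proof.
case: (proj2_sig y) => _ [I yI] _ _ _; have [U IU yU] := hatO_cover yI.
by exists U => //; apply: (ideal_base (hatO_ideal yI)).
Qed.

Definition hat_open (P : set X) :=
  forall y, P y -> exists U, [/\ Omega0 U, OO (dn U) y & OO (dn U) `<=` P].

Lemma hat_openP P : hat_open P <-> exists I, ideal I /\ forall y, P y <-> OO I y.
Proof.
split=> [hP | [I [iI hI]] y /hI /hatO_cover [U IU yU]]; last first.
  exists U; split=> //; first exact: (ideal_base iI).
  by move=> z /(hatO_downset iI IU) /hI.
pose I U := Omega0 U /\ OO (dn U) `<=` P.
have iI : ideal I.
  apply: union_closed_ideal => [U [] // | | U V [oV hV] oU sUV | U V [oU hU] [oV hV]].
  - by split=> [|z /hatO_downset0]; first exact: base0.
  - by split=> // z /(hatO_downset_sub oV sUV) /hV.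
  - by split=> [|z /(hatO_downsetU oU oV) [/hU | /hV]]; first exact: baseU.
exists I; split=> // y; split=> [/hP [U [oU yU hU]] | /hatO_cover [U [oU hU] yU]].
- exact: hatO_downset iI _ yU.
- exact: hU.
Qed.

Lemma hat_openI P Q : hat_open P -> hat_open Q -> hat_open (P `&` Q).
Proof.
move=> hP hQ y [/hP [U [oU yU hU]] /hQ [V [oV yV hV]]].
exists (U `&` V); split; [exact: baseI | exact: hatO_downsetI |].
by move=> z hz; split; [apply: hU | apply: hV]; apply: hatO_downset_sub hz => // x [].
Qed.

Lemma hat_open_downset U : Omega0 U -> hat_open (OO (dn U)).
Proof. by move=> oU y yU; exists U; split.  Qed.

Lemma hat_open_const (p : Prop) : hat_open (fun=> p).
Proof. by move=> y py; have [U oU yU] := hatO_downsetT y; exists U; split.  Qed.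

Lemma hat_open_imply (p : Prop) P : hat_open P -> hat_open (fun z => p -> P z).
Proof.
move=> hP; case: (EM p) => [hp | np] y.
  by move=> /(_ hp) /hP [U [oU yU hU]]; exists U; split=> // z /hU.
by move=> _; have [U oU yU] := hatO_downsetT y; exists U; split=> // z _ /np.
Qed.

Lemma hat_open_bigI n (P : 'I_n -> set X) :
  (forall i, hat_open (P i)) -> hat_open (fun z => forall i, P i z).
Proof.
move=> hP; suff hs (s : seq 'I_n) : hat_open (fun z => forall i, i \in s -> P i z).
  by move=> y Py; have [U [oU yU hU]] := hs (enum 'I_n) y (fun i _ => Py i);
    exists U; split=> // z /hU Pz i; apply: Pz; rewrite mem_enum.
elim: s => [|a s IH] y Py.
  by have [U oU yU] := hatO_downsetT y; exists U; split=> // z _ i; rewrite in_nil.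
have Pya : (P a `&` fun z => forall i, i \in s -> P i z) y.
  by split=> [|i si]; apply: Py; rewrite in_cons ?eqxx ?si ?orbT.
have [U [oU yU hU]] := hat_openI (hP a) IH Pya.
exists U; split=> // z /hU [Pza Pzs] i; rewrite in_cons => /orP [/eqP -> // | /Pzs //].
Qed.

Lemma hat_scott_continuousP (D : Type) (le : D -> D -> Prop) (f : X -> D) :
  hat_scott_continuous Omega0 le f <->
  forall V, scott_open le V -> hat_open (f @^-1` V).
Proof.
split=> hf V /hf; last by move/hat_openP.
by move=> hV; apply/hat_openP.
Qed.

Section PrimeFilters.
Variable A : set (set T).
Hypotheses (A_base : A `<=` Omega0)
  (A_up : forall U V, A U -> Omega0 V -> U `<=` V -> A V)
  (A_meet : forall U V, A U -> A V -> A (U `&` V))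
  (A_prime : forall U V, Omega0 U -> Omega0 V -> A (U `|` V) -> A U \/ A V)
  (A_proper : ~ A set0).

Lemma prime_filter_point W : A W ->
  exists y : X, forall I, ideal I -> OO I y <-> exists2 U, I U & A U.
Proof.
move=> AW; pose y I := ideal I /\ exists2 U, I U & A U.
suff cpy : cp_filter Omega0 y.
  by exists (exist _ y cpy) => I iI; split=> [[] | ] //; split.
split=> [I [] // | | I J [iI [U IU AU]] iJ sIJ | I1 I2 K | Af J0 hA jA [_ [U J0U AU]]].
- by exists (dn W); split; [exact: ideal_downset (A_base AW) | exists W => //; split=> //; exact: A_base].
- by split=> //; exists U => //; apply: sIJ.
- move=> [i1 [U I1U AU]] [i2 [V I2V AV]] [iK K1 K2 Kmax]; split=> //.
  exists (U `&` V); last exact: A_meet.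
  have oUV := baseI (ideal_base i1 I1U) (ideal_base i2 I2V).
  apply: (Kmax _ (idealI i1 i2)) => [V' [] // | V' [] // |].
  by split; [apply: (ideal_down i1 I1U oUV) | apply: (ideal_down i2 I2V oUV)]; move=> x [].
(* Complete primeness: the V whose membership in A is witnessed by a member
   of Af form an ideal (A is prime) above every member of Af, hence above J0. *)
pose G V := Omega0 V /\ (A V -> exists2 I, Af I & exists2 U, I U & A U).
have iG : ideal G.
  apply: union_closed_ideal => [V [] // | | V V' [oV' hV'] oV sVV' | V1 V2 [o1 h1] [o2 h2]].
  - by split=> [|/A_proper //]; exact: base0.
  - by split=> // AV; apply: hV'; apply: A_up AV oV' sVV'.
  - by split=> [|/(A_prime o1 o2) [/h1 | /h2] //]; exact: baseU.
case: jA => _ _ /(_ G iG) J0G.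
have [_ /(_ AU) [I AfI meetI]] : G U.
  by apply: J0G => // I AfI V IV; split=> [|AV]; [exact: ideal_base (hA _ AfI) _ IV | exists I => //; exists V].
by exists I; split=> //; split=> //; apply: hA.
Qed.

End PrimeFilters.

Section Separation.
Variables (W : set T) (J : set (set T)).
Hypotheses (oW : Omega0 W) (iJ : ideal J) (nJW : ~ J W).

Definition avoiding_filter (F : set (set T)) :=
  [/\ F `<=` Omega0, (forall U V, F U -> Omega0 V -> U `<=` V -> F V),
      (forall U V, F U -> F V -> F (U `&` V)), (forall U, F U -> ~ J U) & F W].

Lemma avoiding_filter_up : avoiding_filter (fun V => Omega0 V /\ W `<=` V).
Proof.
split=> [U [] // | U V [oU sU] oV sUV | U V [oU sU] [oV sV] | U [oU sU] JU |].
- by split=> // x /sU /sUV.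
- by split=> [|x Wx]; [exact: baseI | split; [apply: sU | apply: sV]].
- exact: nJW (ideal_down iJ JU oW sU).
- by split.
Qed.

Lemma maximal_avoiding_filter :
  exists F, avoiding_filter F /\ forall G, F `<` G -> ~ avoiding_filter G.
Proof.
pose P F := F = set0 \/ avoiding_filter F.
suff [F [[-> | aF] maxF]] : exists F, P F /\ forall G, F `<` G -> ~ P G.
- exfalso; apply: (maxF _ _ (or_intror avoiding_filter_up)).
  by split=> [U [] | /(_ W (conj oW (@subset_refl _ W)))].
- by exists F; split=> // G FG aG; apply: (maxF G FG); right.
apply: Zorn_bigcup => C CP totC.
case: (EM (exists2 F, C F & F !=set0)) => [[F0 CF0 [U0 F0U0]] | ne]; last first.
  by left; apply/seteqP; split=> // U [F CF FU]; apply: ne; exists F => //; exists U.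
have aC F U : C F -> F U -> avoiding_filter F.
  by move=> CF FU; case: (CP _ CF) => // F_0; rewrite F_0 in FU.
right; split=> [U [F CF FU] | U V [F CF FU] oV sUV | U V [F1 C1 F1U] [F2 C2 F2V] | U [F CF FU] |].
- by case: (aC _ _ CF FU) => sF _ _ _ _; apply: sF.
- by exists F => //; case: (aC _ _ CF FU) => _ upF _ _ _; apply: upF FU oV sUV.
- case: (totC _ _ C1 C2) => [/(_ _ F1U) F2U | /(_ _ F2V) F1V].
  + by exists F2 => //; case: (aC _ _ C2 F2V) => _ _ capF _ _; apply: capF.
  + by exists F1 => //; case: (aC _ _ C1 F1U) => _ _ capF _ _; apply: capF.
- by case: (aC _ _ CF FU) => _ _ _ disF _; apply: disF.
- by exists F0 => //; case: (aC _ _ CF0 F0U0).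
Qed.

Section Maximal.
Variable F : set (set T).
Hypotheses (aF : avoiding_filter F) (maxF : forall G, F `<` G -> ~ avoiding_filter G).

(* Otherwise the filter generated by F and U would be a larger avoiding filter. *)
Lemma maximal_avoiding_filter_out U : Omega0 U -> ~ F U ->
  exists g j, [/\ F g, J j & g `&` U `<=` j].
Proof.
case: aF => sF upF capF disF FW oU nFU; apply: contrapT => nex.
pose FU C := Omega0 C /\ exists2 g, F g & g `&` U `<=` C.
apply: (maxF (G := FU)).
  split=> [g Fg | FUF]; first by split; [exact: sF | exists g => // x []].
  by apply: nFU; apply: FUF; split=> //; exists W => // x [].
split=> [C [] // | C V [oC [g Fg sC]] oV sCV | C1 C2 [o1 [g1 F1 s1]] [o2 [g2 F2 s2]] | C [oC [g Fg sC]] JC |].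
- by split=> //; exists g => // x /sC /sCV.
- split; first exact: baseI.
  by exists (g1 `&` g2); [exact: capF | move=> x [[x1 x2] xU]; split; [apply: s1 | apply: s2]].
- by apply: nex; exists g, C.
- by split; [exact: sF | exists W => // x []].
Qed.

Lemma maximal_avoiding_filter_prime U V : Omega0 U -> Omega0 V ->
  F (U `|` V) -> F U \/ F V.
Proof.
move=> oU oV FUV; case: (EM (F U)) => [|nU]; first by left.
case: (EM (F V)) => [|nV]; first by right.
have [g1 [j1 [F1 J1 s1]]] := maximal_avoiding_filter_out oU nU.
have [g2 [j2 [F2 J2 s2]]] := maximal_avoiding_filter_out oV nV.
case: aF => sF _ capF disF _.
have Fg : F ((g1 `&` g2) `&` (U `|` V)) by apply: (capF) => //; apply: capF.
exfalso; apply: (disF _ Fg); apply: (ideal_down iJ (idealU iJ J1 J2) (sF _ Fg)).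
by move=> x [[x1 x2] [xU | xV]]; [left; apply: s1 | right; apply: s2].
Qed.

End Maximal.

Lemma hatO_separation : exists y : X, OO (dn W) y /\ ~ OO J y.
Proof.
have [F [aF maxF]] := maximal_avoiding_filter.
have Fprime := maximal_avoiding_filter_prime aF maxF.
case: aF => sF upF capF disF FW.
have [y hy] := prime_filter_point sF upF capF Fprime (fun F0 => disF _ F0 (ideal0 iJ)) FW.
exists y; split.
- by apply/(hy _ (ideal_downset oW)); exists W => //; split.
- by move=> /(hy _ iJ) [U JU FU]; apply: (disF _ FU).
Qed.

End Separation.

Section FunctionSpace.
Variables (D : Type) (le : D -> D -> Prop) (bot : D).
Hypotheses (le_po : partial_order le)
  (le_dcpo : forall A, directed le A -> exists s, is_lub le A s)
  (le_bot : forall x, le bot x)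
  (le_cont : continuous_po le)
  (le_bc : forall A, (exists u, is_ub le A u) -> exists s, is_lub le A s).

Local Notation F := (fspace Omega0 le).
Local Notation fle := (fle Omega0 le).

Lemma fspace_open (f : F) V : scott_open le V -> hat_open (sval f @^-1` V).
Proof. by move: (proj2_sig f) => /hat_scott_continuousP; apply. Qed.

Lemma const_continuous c : hat_scott_continuous Omega0 le (fun=> c).
Proof. by apply/hat_scott_continuousP => V _; exact: hat_open_const. Qed.

Lemma fle_po : partial_order fle.
Proof.
split=> [f y | f g h fg gh y | [f cf] [g cg] fg gf]; first exact: (po_refl le_po).
- exact: (po_trans le_po (fg y) (gh y)).
- by apply: eq_exist; apply: funext => y; exact: (po_anti le_po (fg y) (gf y)).
Qed.

Definition pointwise_lub (A : set F) (s : F) :=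
  forall y, is_lub le [set sval f y | f in A] (sval s y).

Lemma is_lub_pointwise A s : pointwise_lub A s -> is_lub fle A s.
Proof.
move=> hs; split=> [f Af y | u ub y]; first by apply: (hs y).1; exists f.
by apply: (hs y).2 => _ [f Af <-]; apply: ub.
Qed.

Lemma directed_pointwise A : directed fle A -> forall y, directed le [set sval f y | f in A].
Proof.
move=> [[f0 Af0] dA] y; split=> [|_ _ [f1 A1 <-] [f2 A2 <-]]; first by exists (sval f0 y), f0.
by have [f3 [A3 l1 l2]] := dA _ _ A1 A2; exists (sval f3 y); split=> //; exists f3.
Qed.

Lemma directed_pointwise_lub A : directed fle A -> exists s, pointwise_lub A s.
Proof.
move=> dA; have [g hg] := choice (fun y => le_dcpo (directed_pointwise dA y)).
suff gc : hat_scott_continuous Omega0 le g by exists (exist _ g gc).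
apply/hat_scott_continuousP => V sV y Vgy.
have [_ [[f Af <-] Vfy]] := sV.2 _ _ (directed_pointwise dA y) (hg y) Vgy.
have [U [oU yU hU]] := fspace_open sV Vfy.
exists U; split=> // z /hU Vfz; apply: sV.1 Vfz _.
by apply: (hg z).1; exists f.
Qed.

Lemma fspace_join2 (f1 f2 : F) (h : X -> D) :
  (forall y, le (sval f1 y) (h y)) -> (forall y, le (sval f2 y) (h y)) ->
  exists g : F, forall y, is_lub le [set sval f1 y; sval f2 y] (sval g y).
Proof.
move=> h1 h2; have [g hg] := choice (fun y => lub2_exists le_bc (h1 y) (h2 y)).
suff gc : hat_scott_continuous Omega0 le g by exists (exist _ g gc).
apply/hat_scott_continuousP => V sV y Vgy.
have [a1 [a2 [c [w1 w2 hc Vc]]]] := lub2_approx le_po le_cont le_bc (hg y) sV Vgy.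
have [U [oU yU hU]] := hat_openI (fspace_open (f := f1) (scott_open_way_below le_po le_cont a1))
  (fspace_open (f := f2) (scott_open_way_below le_po le_cont a2)) (conj w1 w2).
exists U; split=> // z /hU [z1 z2]; apply: sV.1 Vc _.
apply: (lub2_le hc).
- exact: (po_trans le_po (way_below_le le_po z1) (lub2_ubl (hg z))).
- exact: (po_trans le_po (way_below_le le_po z2) (lub2_ubr (hg z))).
Qed.

Definition fbot : F := exist _ (fun=> bot) (const_continuous bot).

Lemma fbot_le f : fle fbot f. Proof. by move=> y; apply: le_bot. Qed.

(* The pointwise join L of a bounded family is the directed join of the
   continuous maps below L. *)
Lemma bounded_fle_lub (A : set F) : (exists h, is_ub fle A h) -> exists s, is_lub fle A s.
Proof.
move=> [h ubh].
have bounded y : exists s, is_lub le [set sval f y | f in A] s.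
  by apply: le_bc; exists (sval h y) => _ [f Af <-]; apply: ubh.
have [L hL] := choice bounded.
pose C (g : F) := forall y, le (sval g y) (L y).
have dC : directed fle C.
  split=> [|g1 g2 C1 C2]; first by exists fbot => y; apply: le_bot.
  have [g hg] := fspace_join2 C1 C2.
  exists g; split=> y; [exact: lub2_le (hg y) (C1 y) (C2 y) | exact: lub2_ubl | exact: lub2_ubr].
have [M hM] := directed_pointwise_lub dC.
have ML y : sval M y = L y.
  apply: (po_anti le_po); first by apply: (hM y).2 => _ [g Cg <-].
  apply: (hL y).2 => _ [f Af <-]; apply: (hM y).1; exists f => //.
  by move=> z; apply: (hL z).1; exists f.
by exists M; apply: is_lub_pointwise => y; rewrite ML.
Qed.

Lemma hatB_continuous D0 g : hatB Omega0 le D0 g -> hat_scott_continuous Omega0 le g.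
Proof.
move=> [n [b [W [oW _ _ hg]]]]; apply/hat_scott_continuousP => V sV y Vgy.
pose Q z := forall i, OO (dn (W i)) y -> OO (dn (W i)) z.
have hQ : hat_open Q.
  by apply: hat_open_bigI => i; apply: hat_open_imply; apply: hat_open_downset.
have [U [oU yU hU]] := hQ y (fun i => id).
exists U; split=> // z /hU Qz; apply: sV.1 Vgy _.
by apply: (hg y).2 => _ [i [yi ->]]; apply: (hg z).1; exists i; split=> //; exact: Qz.
Qed.

Definition step (b : D) (W : set T) : X -> D :=
  fun y => if pselect (OO (dn W) y) then b else bot.

Lemma hatB_step D0 b W : Omega0 W -> D0 b -> hatB Omega0 le D0 (step b W).
Proof.
move=> oW D0b; exists 1, (fun=> b), (fun=> W); split=> // [J _ | y].
  by exists b => j _; apply: (po_refl le_po).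
rewrite /step; case: pselect => yW; split=> [_ [i [yWi ->]] | u ub].
- exact: (po_refl le_po).
- by apply: ub; exists ord0.
- by case: (yW yWi).
- exact: le_bot.
Qed.

Definition fstep b W (oW : Omega0 W) : F :=
  exist _ (step b W) (hatB_continuous (@hatB_step setT b W oW I)).

Definition approx_ideal (b : D) (A : set F) : set (set T) :=
  fun U => Omega0 U /\ exists2 k, A k & OO (dn U) `<=` (fun z => way_below le b (sval k z)).

Lemma approx_ideal_ideal b A : directed fle A -> ideal (approx_ideal b A).
Proof.
move=> [[k0 Ak0] dA].
apply: union_closed_ideal => [U [] // | | U V [oV [k Ak hk]] oU sUV | U V [oU [k1 A1 h1]] [oV [k2 A2 h2]]].
- by split; [exact: base0 | exists k0 => // z /hatO_downset0].
- by split=> //; exists k => // z /(hatO_downset_sub oV sUV) /hk.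
have [k3 [A3 l1 l2]] := dA _ _ A1 A2.
split; first exact: baseU.
exists k3 => // z /(hatO_downsetU oU oV) [/h1 | /h2] wz.
- exact: (way_below_mono le_po (po_refl le_po b) wz (l1 z)).
- exact: (way_below_mono le_po (po_refl le_po b) wz (l2 z)).
Qed.

(* If the approximation ideal missed W, a point of O_{dn W} outside it would
   contradict b << f y by interpolation. *)
Lemma step_way_below (f : F) b W (oW : Omega0 W) :
  OO (dn W) `<=` (fun y => way_below le b (sval f y)) -> way_below fle (fstep b oW) f.
Proof.
move=> hb A s dA lA fs.
have [s' hs'] := directed_pointwise_lub dA.
have ss' := lub_unique fle_po lA (is_lub_pointwise hs'); rewrite -ss' in hs'.
have iJ := approx_ideal_ideal b dA.
case: (EM (approx_ideal b A W)) => [[_ [k Ak hk]] | nJ].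
  exists k; split=> // y; rewrite /= /step; case: pselect => [yW | nyW].
  - exact: (way_below_le le_po (hk y yW)).
  - exact: le_bot.
have [y [yW nyJ]] := hatO_separation oW iJ nJ.
have [c [bc cf]] := way_below_interpolate le_po le_cont (hb y yW).
have [_ [[k Ak <-] ck]] := cf _ _ (directed_pointwise dA y) (hs' y) (fs y).
have [U [oU yU hU]] := fspace_open (f := k) (scott_open_way_below le_po le_cont b)
  (way_below_mono le_po (po_refl le_po b) bc ck).
by exfalso; apply: nyJ; apply: hatO_downset iJ _ yU; split=> //; exists k.
Qed.

Lemma hatB_bot D0 : hatB Omega0 le D0 (fun=> bot).
Proof.
exists 0, (fun=> bot), (fun=> set0); split=> [_ | [m m_lt0] | J _ | y]; first exact: base0.
- by rewrite ltn0 in m_lt0.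
- by exists bot => j _; exact: (po_refl le_po).
- by split=> [_ [i [_ ->]] | u _]; apply: le_bot.
Qed.

Lemma hatB_join2 D0 (g1 g2 g : X -> D) :
  hatB Omega0 le D0 g1 -> hatB Omega0 le D0 g2 ->
  (forall y, is_lub le [set g1 y; g2 y] (g y)) -> hatB Omega0 le D0 g.
Proof.
move=> [n1 [b1 [W1 [o1 d1 _ l1]]]] [n2 [b2 [W2 [o2 d2 _ l2]]]] hg.
pose b i := match split i with inl j => b1 j | inr j => b2 j end.
pose W i := match split i with inl j => W1 j | inr j => W2 j end.
have le_b y i : OO (dn (W i)) y -> le (b i) (g y).
  rewrite /b /W; case: (split i) => j yj.
  - by apply: (po_trans le_po) (lub2_ubl (hg y)); apply: (l1 y).1; exists j.
  - by apply: (po_trans le_po) (lub2_ubr (hg y)); apply: (l2 y).1; exists j.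
exists (n1 + n2), b, W; split=> [i | i | J [y hy] | y].
- by rewrite /W; case: (split i).
- by rewrite /b; case: (split i).
- by exists (g y) => j /hy; apply: le_b.
split=> [_ [i [yi ->]] | u ub]; first exact: le_b.
apply: (lub2_le (hg y)); [apply: (l1 y).2 | apply: (l2 y).2] => _ [j [yj ->]].
- by apply: ub; exists (lshift n2 j); rewrite /b /W -/(unsplit (inl j)) unsplitK.
- by apply: ub; exists (rshift n1 j); rewrite /b /W -/(unsplit (inr j)) unsplitK.
Qed.

Lemma basis_fspace D0 : is_basis le D0 -> is_basis fle (fun g : F => hatB Omega0 le D0 (sval g)).
Proof.
move=> hD0 f; split; first split.
- by exists fbot; split; [exact: hatB_bot | exact: (way_below_bot fbot_le)].
- move=> g1 g2 [B1 w1] [B2 w2].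
  have [g hg] := fspace_join2 (way_below_le fle_po w1) (way_below_le fle_po w2).
  have lg : is_lub fle [set g1; g2] g.
    split=> [_ [->|->] y | u ub y]; [exact: lub2_ubl (hg y) | exact: lub2_ubr (hg y) |].
    by apply: (lub2_le (hg y)); apply: ub; [left | right].
  exists g; split; [split; [exact: hatB_join2 B1 B2 hg | exact: (way_below_lub2 fle_po w1 w2 lg)] | |].
  + exact: lub2_ubl lg.
  + exact: lub2_ubr lg.
split=> [g [_ /(way_below_le fle_po)] // | u ub y].
have [_ [_ lub_y]] := hD0 (sval f y); apply: lub_y => d [D0d wd].
have [U [oU yU hU]] := fspace_open (f := f) (scott_open_way_below le_po le_cont d) wd.
have : fle (fstep d oU) u by apply: ub; split; [exact: hatB_step | exact: step_way_below].
by move/(_ y); rewrite /= /step; case: pselect.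
Qed.


Lemma bc_domain_fspace : bc_domain fle.
Proof.
split.
- by split=> [|A /directed_pointwise_lub [s hs]]; [exact: fle_po | exists s; exact: is_lub_pointwise].
- by exists fbot; exact: fbot_le.
- exact: (basis_continuous_po fle_po (basis_fspace (continuous_basisT le_cont))).
- exact: bounded_fle_lub.
Qed.

Lemma hatB_le n1 (b1 : 'I_n1 -> D) W1 n2 (b2 : 'I_n2 -> D) W2 (g1 g2 : X -> D) :
  (forall i, exists j, b1 i = b2 j /\ W1 i = W2 j) ->
  (forall y, is_lub le (fun d => exists i, OO (dn (W1 i)) y /\ d = b1 i) (g1 y)) ->
  (forall y, is_lub le (fun d => exists i, OO (dn (W2 i)) y /\ d = b2 i) (g2 y)) ->
  forall y, le (g1 y) (g2 y).
Proof.
move=> sub12 l1 l2 y; apply: (l1 y).2 => _ [i [yi ->]].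
have [j [-> eW]] := sub12 i.
by apply: (l2 y).1; exists j; split=> //; rewrite -eW.
Qed.

(* A member of hatB is determined by the finite list of codes of its pairs (b_i, W_i). *)
Lemma countable_hatB B : countable_set Omega0 -> countable_set B ->
  countable_set (fun f : F => hatB Omega0 le B (sval f)).
Proof.
move=> [gO gO_inj] [gB gB_inj].
pose code n (b : 'I_n -> D) (W : 'I_n -> set T) := [seq (gB (b i), gO (W i)) | i <- enum 'I_n].
pose rep (f : F) s := exists n (b : 'I_n -> D) (W : 'I_n -> set T),
  [/\ forall i, Omega0 (W i), forall i, B (b i),
      forall y, is_lub le (fun d => exists i, OO (dn (W i)) y /\ d = b i) (sval f y)
    & s = code n b W].
have code_sub n1 b1 W1 n2 b2 W2 : (forall i, Omega0 (W1 i)) -> (forall i, B (b1 i)) ->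
    (forall j, Omega0 (W2 j)) -> (forall j, B (b2 j)) -> code n1 b1 W1 = code n2 b2 W2 ->
    forall i, exists j, b1 i = b2 j /\ W1 i = W2 j.
  move=> o1 B1 o2 B2 e i.
  have : (gB (b1 i), gO (W1 i)) \in code n1 b1 W1 by apply: map_f; rewrite mem_enum.
  rewrite e => /mapP [j _ [eb eW]].
  by exists j; split; [exact: gB_inj eb | exact: gO_inj eW].
have ex f : exists s, hatB Omega0 le B (sval f) -> rep f s.
  case: (EM (hatB Omega0 le B (sval f))) => [[n [b [W [oW Bb _ hf]]]] | nf]; last by exists [::].
  by exists (code n b W) => _; exists n, b, W.
have [c hc] := choice ex.
exists (fun f => pickle (c f)) => f1 f2 /hc [n1 [b1 [W1 [o1 B1 l1 c1]]]].
move=> /hc [n2 [b2 [W2 [o2 B2 l2 c2]]]] /(pcan_inj pickleK_inv).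
rewrite c1 c2 => e; apply: (po_anti fle_po).
- exact: hatB_le (code_sub _ _ _ _ _ _ o1 B1 o2 B2 e) l1 l2.
- exact: hatB_le (code_sub _ _ _ _ _ _ o2 B2 o1 B1 (esym e)) l2 l1.
Qed.

Lemma omega_continuous_fspace :
  countable_set Omega0 -> omega_continuous le -> omega_continuous fle.
Proof.
move=> cO [_ [B [basisB cB]]]; split; first by case: bc_domain_fspace.
exists (fun f : F => hatB Omega0 le B (sval f)); split; first exact: basis_fspace.
exact: countable_hatB.
Qed.

End FunctionSpace.
End HatX.

Theorem mainTheorem16 (T : topologicalType) (Omega0 : set (set T))
    (D : Type) (le : D -> D -> Prop) (D0 : set D) :
  viable_base Omega0 -> bc_domain le -> is_basis le D0 ->
  [/\ (forall g, hatB Omega0 le D0 g -> hat_scott_continuous Omega0 le g),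
      bc_domain (fle Omega0 le),
      is_basis (fle Omega0 le) (fun f => hatB Omega0 le D0 (proj1_sig f)) &
      (countable_set Omega0 -> omega_continuous le ->
         omega_continuous (fle Omega0 le))].
Proof.
move=> base [[le_po le_dcpo] [bot le_bot] le_cont le_bc] basisD0; split.
- by move=> g; apply: hatB_continuous.
- exact: (bc_domain_fspace base le_po le_dcpo le_bot le_cont le_bc).
- exact: (basis_fspace base le_po le_dcpo le_bot le_cont le_bc basisD0).
- exact: (omega_continuous_fspace base le_po le_dcpo le_bot le_cont le_bc).
Qed.
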